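(* For every $k\ge1$, the number of $\tau\in\mathcal{S}_k$ with $\mathcal{J}(\tau)=\{0,1,\ldots,k\}$ equals $2^{k-1}$.
   Context: The pattern of a word of $j$ distinct letters is its order-preserving relabeling by $\{1,\ldots,j\}$; the length-$j$ initial pattern of $\tau$ is the pattern of $\tau_1\ldots\tau_j$. The $j$-set $\mathcal{J}(\tau)$ of $\tau\in\mathcal{S}_k$ is the set consisting of $0$ together with all $j\in\{1,\ldots,k\}$ such that the length-$j$ initial pattern of $\tau$ is an involution in $\mathcal{S}_j$. *)

From mathcomp Require Import all_boot all_fingroup.
Set Implicit Arguments. Unset Strict Implicit. Unset Printing Implicit Defensive.

(* Positions and values are 0-based: tau : 'S_k permutes {0,...,k-1}. *)

(* tau viewed as a function on nat (0 outside {0,...,k-1}) *)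
Definition perm_nat (k : nat) (tau : 'S_k) (i : nat) : nat :=
  if insub i is Some o then val (tau o) else 0.

(* value at position i (< j) of the length-j initial pattern of tau:
   the rank (0-based) of tau_i among tau_0, ..., tau_{j-1}. *)
Definition init_pattern (k : nat) (tau : 'S_k) (j i : nat) : nat :=
  count (fun i' => perm_nat tau i' < perm_nat tau i) (iota 0 j).

Definition init_pattern_involution (k : nat) (tau : 'S_k) (j : nat) : bool :=
  all (fun i => init_pattern tau j (init_pattern tau j i) == i) (iota 0 j).

Definition jset (k : nat) (tau : 'S_k) : {set 'I_k.+1} :=
  [set j : 'I_k.+1 | (val j == 0) || init_pattern_involution tau (val j)].

From mathcomp Require Import all_boot all_fingroup.
From mathcomp Require Import zify.
Set Implicit Arguments. Unset Strict Implicit. Unset Printing Implicit Defensive.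

(* Write tau in S_(k+1) as its length-k initial pattern sigma followed by the
   value v = tau(k).  All initial patterns of tau are involutions iff this holds
   for sigma and tau itself is an involution.  When it holds for sigma, the tail
   of sigma starting at position r = sigma(k-1) is the decreasing run of values
   r + k - 1 - i; from this one checks that tau is an involution exactly when
   v = k or v = r.  Hence every admissible sigma has exactly two admissible
   extensions, and the count doubles at each step. *)

Lemma perm_natE k (t : 'S_k) (x : 'I_k) : perm_nat t x = t x.
Proof. by rewrite /perm_nat valK. Qed.

Lemma perm_nat_lt k (t : 'S_k) i : i < k -> perm_nat t i < k.
Proof. by move=> ltik; rewrite -[i]/(val (Ordinal ltik)) perm_natE. Qed.

Lemma perm_nat_inj k (t : 'S_k) i j :
  i < k -> j < k -> perm_nat t i = perm_nat t j -> i = j.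
Proof.
move=> ltik ltjk; rewrite -[i]/(val (Ordinal ltik)) -[j]/(val (Ordinal ltjk)).
by rewrite !perm_natE => /val_inj/perm_inj ->.
Qed.

Lemma bump_small h i : i < h -> bump h i = i.
Proof. by move=> ltih; rewrite /bump leqNgt ltih. Qed.

Lemma bump_large h i : h <= i -> bump h i = i.+1.
Proof. by move=> lehi; rewrite /bump lehi add1n. Qed.

Lemma perm_nat_lift k (s : 'S_k) (v : 'I_k.+1) i : i < k ->
  perm_nat (lift_perm ord_max v s) i = bump v (perm_nat s i).
Proof.
move=> ltik; have liftE : i = lift ord_max (Ordinal ltik) :> nat.
  by rewrite /= bump_small.
rewrite [in LHS]liftE perm_natE lift_perm_lift /=.
by rewrite -[i in RHS]/(val (Ordinal ltik)) perm_natE.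
Qed.

Lemma perm_nat_lift_max k (s : 'S_k) (v : 'I_k.+1) :
  perm_nat (lift_perm ord_max v s) k = v.
Proof. by rewrite -[k]/(val (@ord_max k)) perm_natE lift_perm_id. Qed.

Lemma lift_perm_max_decomp k (t : 'S_k.+1) :
  exists s : 'S_k, t = lift_perm ord_max (t ord_max) s.
Proof.
have neq_max x : t ord_max != t (lift ord_max x).
  by rewrite (inj_eq perm_inj) neq_lift.
pose g x := odflt x (unlift (t ord_max) (t (lift ord_max x))).
have liftgE x : lift (t ord_max) (g x) = t (lift ord_max x).
  by rewrite /g; case: (unlift_some (neq_max x)) => y -> ->.
have g_inj : injective g.
  by move=> x y /(congr1 (lift (t ord_max))); rewrite !liftgE => /perm_inj/lift_inj.
exists (perm g_inj); apply/permP => x.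
case: (unliftP ord_max x) => [y ->|->]; last by rewrite lift_perm_id.
by rewrite lift_perm_lift permE liftgE.
Qed.

Lemma count_ltn_iota0 c n : c <= n -> count (fun i => i < c) (iota 0 n) = c.
Proof. by move=> lecn; rewrite -size_filter (filter_iota_ltn 0 lecn) size_iota. Qed.

Lemma init_pattern_lt k (t : 'S_k) j i : i < j -> init_pattern t j i < j.
Proof.
move=> ltij; set below := fun i' => perm_nat t i' < perm_nat t i.
have := count_predC below (iota 0 j); rewrite size_iota.
have : has (predC below) (iota 0 j).
  by apply/hasP; exists i; rewrite ?mem_iota //= /below ltnn.
rewrite has_count /init_pattern -/below; lia.
Qed.

Lemma init_pattern_lift k (s : 'S_k) (v : 'I_k.+1) j i : j <= k -> i < k ->
  init_pattern (lift_perm ord_max v s) j i = init_pattern s j i.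
Proof.
move=> lejk ltik; apply: eq_in_count => i'; rewrite mem_iota => /andP[_ lti'j].
by rewrite !perm_nat_lift ?(leq_trans lti'j) // !ltnNge leq_bump2.
Qed.

Lemma init_pattern_full k (t : 'S_k) i : i < k -> init_pattern t k i = perm_nat t i.
Proof.
move=> ltik; have perm_values : perm_eq (map (perm_nat t) (iota 0 k)) (iota 0 k).
  apply: uniq_perm; first 2 last.
  - move=> y; rewrite mem_iota add0n; apply/mapP/idP => [[x] | ltyk].
      by rewrite mem_iota => /andP[_ ltxk] ->; apply: perm_nat_lt.
    exists (val ((t^-1)%g (Ordinal ltyk))); first by rewrite mem_iota /=.
    by rewrite perm_natE permKV.
  - rewrite map_inj_in_uniq ?iota_uniq // => x y.
    by rewrite !mem_iota => /andP[_ ltxk] /andP[_ ltyk]; apply: perm_nat_inj.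
  - exact: iota_uniq.
rewrite /init_pattern -[count _ _]/(count (preim (perm_nat t) (gtn (perm_nat t i))) _).
by rewrite -count_map (seq.permP perm_values) count_ltn_iota0 // ltnW ?perm_nat_lt.
Qed.

Definition involutive_below k (f : nat -> nat) := forall i, i < k -> f (f i) = i.

Definition prefix_involutive k (t : 'S_k) :=
  forall j, 0 < j <= k -> init_pattern_involution t j.

Lemma init_pattern_involution_lift k (s : 'S_k) (v : 'I_k.+1) j : j <= k ->
  init_pattern_involution (lift_perm ord_max v s) j = init_pattern_involution s j.
Proof.
move=> lejk; apply: eq_in_all => i; rewrite mem_iota => /andP[_ ltij].
have ltik := leq_trans ltij lejk.
by rewrite !init_pattern_lift // (leq_trans (init_pattern_lt s ltij)).
Qed.

Lemma init_pattern_involution_full k (t : 'S_k) :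
  init_pattern_involution t k <-> involutive_below k (perm_nat t).
Proof.
split=> [/allP inv_t i ltik | inv_t].
  have := inv_t i; rewrite mem_iota ltik => /(_ isT) /eqP.
  by rewrite !init_pattern_full ?perm_nat_lt.
apply/allP => i; rewrite mem_iota => /andP[_ ltik].
by rewrite !init_pattern_full ?perm_nat_lt // inv_t.
Qed.

Lemma jset_fullP k (t : 'S_k) : jset t == [set: 'I_k.+1] <-> prefix_involutive t.
Proof.
split=> [/eqP jset_t j /andP[gt0j lejk] | pre_t].
  have := in_setT (Ordinal (lejk : j < k.+1)); rewrite -jset_t inE /=.
  by rewrite eqn0Ngt gt0j.
apply/eqP/setP => j; rewrite !inE; have [//|/= neq0j] := eqVneq (val j) 0.
by apply: pre_t; rewrite lt0n neq0j -ltnS ltn_ord.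
Qed.

Lemma prefix_involutive_below k (t : 'S_k) :
  prefix_involutive t -> involutive_below k (perm_nat t).
Proof.
case: k t => [//|k] t pre_t; apply/init_pattern_involution_full/pre_t.
by rewrite ltnSn.
Qed.

Lemma prefix_involutive_lift k (s : 'S_k) (v : 'I_k.+1) :
  prefix_involutive (lift_perm ord_max v s) <->
  prefix_involutive s /\ involutive_below k.+1 (perm_nat (lift_perm ord_max v s)).
Proof.
split=> [pre_t | [pre_s inv_t] j /andP[gt0j]].
  split; last exact: prefix_involutive_below.
  move=> j /andP[gt0j lejk]; rewrite -(init_pattern_involution_lift s v lejk).
  by apply: pre_t; rewrite gt0j (leq_trans lejk).
rewrite leq_eqVlt ltnS => /orP[/eqP-> | lejk]; first exact/init_pattern_involution_full.
by rewrite init_pattern_involution_lift // pre_s ?gt0j.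
Qed.

Lemma involutive_lift_lt k (s : 'S_k) (v : 'I_k.+1) : v < k ->
  involutive_below k (perm_nat s) ->
  involutive_below k.+1 (perm_nat (lift_perm ord_max v s)) ->
  perm_nat s k.-1 = v.
Proof.
move=> ltvk inv_s inv_t; have := inv_t k (ltnSn k).
rewrite perm_nat_lift_max perm_nat_lift // => bumpE.
have svE : perm_nat s v = k.-1.
  by move: bumpE (perm_nat_lt s ltvk); rewrite /bump; case: (v <= _); lia.
by rewrite -svE inv_s.
Qed.

Lemma prefix_involutive_tail k (s : 'S_k) : prefix_involutive s ->
  forall i, perm_nat s k.-1 <= i < k -> perm_nat s i + i = perm_nat s k.-1 + k.-1.
Proof.
elim: k s => [|k IH] t pre_t i; first by rewrite ltn0 andbF.
have [s tE] := lift_perm_max_decomp t.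
move: (t ord_max) tE pre_t => v -> /prefix_involutive_lift[pre_s inv_t].
rewrite /= perm_nat_lift_max ltnS => /andP[levi leik].
have [ltik | leki] := ltnP i k; last first.
  have -> : i = k by lia.
  by rewrite perm_nat_lift_max.
have ltvk : v < k by lia.
have svE := involutive_lift_lt ltvk (prefix_involutive_below pre_s) inv_t.
have := IH s pre_s i; rewrite svE levi ltik => /(_ isT) tailE.
by rewrite perm_nat_lift // bump_large; lia.
Qed.

Lemma involutive_lift_max k (s : 'S_k) : involutive_below k (perm_nat s) ->
  involutive_below k.+1 (perm_nat (lift_perm ord_max ord_max s)).
Proof.
move=> inv_s i; rewrite ltnS leq_eqVlt => /orP[/eqP-> | ltik].
  by rewrite !perm_nat_lift_max.
have ltsik := perm_nat_lt s ltik.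
by rewrite !perm_nat_lift ?bump_small ?inv_s // bump_small.
Qed.

Lemma involutive_lift_last k (s : 'S_k) : 0 < k -> prefix_involutive s ->
  involutive_below k.+1 (perm_nat (lift_perm ord_max (inord (perm_nat s k.-1)) s)).
Proof.
move=> gt0k pre_s; set r := perm_nat s k.-1; set t := lift_perm _ _ s.
have ltrk : r < k by apply: perm_nat_lt; lia.
have tkE : perm_nat t k = r by rewrite perm_nat_lift_max inordK // ltnW.
have tE i : i < k -> perm_nat t i = bump r (perm_nat s i).
  by move=> ltik; rewrite perm_nat_lift // inordK // ltnW.
have inv_s := prefix_involutive_below pre_s.
have tailE := prefix_involutive_tail pre_s.
have head_small i : i < r -> perm_nat s i < r.
  move=> ltir; rewrite ltnNge; apply/negP => lersi.
  have ltsik : perm_nat s i < k by apply: perm_nat_lt; lia.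
  by have := tailE _ (introT andP (conj lersi ltsik)); rewrite inv_s; lia.
move=> i; rewrite ltnS leq_eqVlt => /orP[/eqP-> | ltik].
  rewrite tkE tE // bump_large; have := tailE r; rewrite leqnn ltrk; lia.
have [ltir | leri] := ltnP i r.
  have ltsir := head_small i ltir.
  rewrite [perm_nat t i]tE // bump_small // tE; last by lia.
  by rewrite bump_small inv_s //; lia.
have := tailE i; rewrite leri ltik => /(_ isT) tailEi.
rewrite [perm_nat t i]tE // bump_large; last by lia.
have [eqir | neqir] := eqVneq i r.
  by move: tailEi; rewrite eqir => tailEr; have -> : (perm_nat s r).+1 = k by lia.
have := tailE (perm_nat s i).+1; rewrite tE; last by lia.
by move=> tailEsi; rewrite bump_large; lia.
Qed.

Definition extension_value k (s : 'S_k) (b : bool) : 'I_k.+1 :=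
  if b then inord (perm_nat s k.-1) else ord_max.

Lemma prefix_involutive_liftP k (s : 'S_k) (v : 'I_k.+1) :
  0 < k -> prefix_involutive s ->
  prefix_involutive (lift_perm ord_max v s) <-> exists b, v = extension_value s b.
Proof.
move=> gt0k pre_s; rewrite prefix_involutive_lift; split=> [[_ inv_t] | [[] ->]].
- have := ltn_ord v; rewrite ltnS leq_eqVlt => /orP[/eqP eqvk | ltvk].
    by exists false; apply: val_inj.
  exists true; apply: val_inj; rewrite /= inordK; last by apply/ltnW/perm_nat_lt; lia.
  by rewrite (involutive_lift_lt ltvk (prefix_involutive_below pre_s) inv_t).
- by split; last exact: involutive_lift_last.
- by split; last exact/involutive_lift_max/prefix_involutive_below.
Qed.

Lemma extension_value_inj k (s : 'S_k) : 0 < k -> injective (extension_value s).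
Proof.
move=> gt0k; have ltrk : perm_nat s k.-1 < k by apply: perm_nat_lt; lia.
by case=> [] [] // /(congr1 val); rewrite /= inordK //; lia.
Qed.

Lemma lift_perm_inj n (i : 'I_n.+1) (v1 v2 : 'I_n.+1) (s1 s2 : 'S_n) :
  lift_perm i v1 s1 = lift_perm i v2 s2 -> v1 = v2 /\ s1 = s2.
Proof.
move=> eq_t; have eqv : v1 = v2 by rewrite -(lift_perm_id i v1 s1) eq_t lift_perm_id.
split=> //; apply/permP => x; apply: (@lift_inj _ v1).
by rewrite -(lift_perm_lift i v1 s1) eq_t lift_perm_lift eqv.
Qed.

Definition full_jset_perms k : {set 'S_k} := [set tau | jset tau == [set: 'I_k.+1]].

Definition extend k (p : 'S_k * bool) : 'S_k.+1 :=
  lift_perm ord_max (extension_value p.1 p.2) p.1.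

Lemma extend_inj k : 0 < k -> injective (@extend k).
Proof.
move=> gt0k [s1 b1] [s2 b2] /lift_perm_inj[/= + eqs]; rewrite -{}eqs.
by move/(extension_value_inj gt0k) ->.
Qed.

Lemma full_jset_perms_succE k : 0 < k ->
  full_jset_perms k.+1 = @extend k @: setX (full_jset_perms k) [set: bool].
Proof.
move=> gt0k; apply/setP => t; rewrite inE; apply/idP/imsetP => [/jset_fullP pre_t | ].
  have [s tE] := lift_perm_max_decomp t.
  move: (t ord_max) tE pre_t => v -> pre_t.
  have [pre_s _] := (prefix_involutive_lift s v).1 pre_t.
  have [b vE] := (prefix_involutive_liftP v gt0k pre_s).1 pre_t.
  by exists (s, b); rewrite ?inE ?andbT ?vE //; apply/jset_fullP.
case=> [[s b]]; rewrite !inE andbT => /jset_fullP pre_s ->.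
by apply/jset_fullP/(prefix_involutive_liftP _ gt0k pre_s); exists b.
Qed.

Lemma card_full_jset_perms_succ k : 0 < k ->
  #|full_jset_perms k.+1| = 2 * #|full_jset_perms k|.
Proof.
move=> gt0k; rewrite full_jset_perms_succE // card_in_imset; last first.
  by move=> p q _ _; apply: extend_inj.
by rewrite cardsX cardsT card_bool mulnC.
Qed.

Lemma card_full_jset_perms1 : #|full_jset_perms 1| = 1.
Proof.
suff -> : full_jset_perms 1 = [set: 'S_1] by rewrite cardsT card_Sn.
apply/setP => t; rewrite !inE.
apply/jset_fullP => j /andP[gt0j lej1]; have -> : j = 1 by lia.
apply/init_pattern_involution_full => i; rewrite ltnS leqn0 => /eqP->.
by have := perm_nat_lt t (ltn0Sn 0); rewrite ltnS leqn0 => /eqP t0; rewrite !t0.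
Qed.

Theorem mainTheorem9 (k : nat) : 1 <= k ->
  #|[set tau : 'S_k | jset tau == [set: 'I_k.+1]]| = 2 ^ (k - 1).
Proof.
rewrite -/(full_jset_perms k); elim: k => [//|[_ _ | k IH _]].
  exact: card_full_jset_perms1.
by rewrite card_full_jset_perms_succ // IH // subn1 -expnS.
Qed.
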